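(* The maps $\partial_{l-k}:\mathcal M_{l-k}\to\mathcal M_{l-k-1}$ are homomorphisms of $\mathbb Z[W]$-modules and satisfy $\partial_{l-k-1}\circ\partial_{l-k}=0$; thus $(\mathcal M_*,\partial)$ is a chain complex of $\mathbb Z[W]$-modules.
   Context: Let $\mathfrak g$ be a real split semisimple Lie algebra of rank $l$ with simple roots $\Pi=\{\alpha_1,\dots,\alpha_l\}$, Cartan matrix $C_{i,j}=\alpha_i(h_{\alpha_j})$ ($h_{\alpha_j}$ coroots), Weyl group $W$. For $S\subset\Pi$ let $W_S$ be generated by $s_\alpha$, $\alpha\in S$, and $\mathbb D(S)$ the set of functions $\eta:S\to\{\pm1\}$. For $\alpha_i\in S$ let $(s_{\alpha_i}\eta)(\alpha_j)=\eta(\alpha_j)\eta(\alpha_i)^{-C_{j,i}}$ ($\alpha_j\in S$) and $r_i=|\{\alpha_j\in\Pi\setminus S:C_{j,i}\text{ odd}\}|$; the free abelian group $\mathbb Z[\mathbb D(S)]$ is a $\mathbb Z[W_S]$-module with $s_{\alpha_i}\cdot\eta=\eta(\alpha_i)^{r_i}(s_{\alpha_i}\eta)$. Put $\mathcal M(S)=\mathbb Z[W]\otimes_{\mathbb Z[W_S]}\mathbb Z[\mathbb D(S)]$, with $\mathbb Z$-basis $w^\bullet\otimes\eta$ ($w^\bullet$ minimal-length representatives of $W/W_S$, $\eta\in\mathbb D(S)$), and $\mathcal M_{l-k}=\bigoplus_{|S|=k}\mathcal M(S)$. For $\eta\in\mathbb D(S)$ with $\Pi\setminus S=\{\alpha_{i_1},\dots,\alpha_{i_m}\}$,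 $i_1<\dots<i_m$, and $c\in\{1,2\}$, $\partial_{j,c}\eta\in\mathbb D(S\cup\{\alpha_{i_j}\})$ extends $\eta$ by $\alpha_{i_j}\mapsto-1$ if $c=1$, $+1$ if $c=2$. Define $\partial_{l-k}(w^\bullet\otimes\eta)=\sum_{j=1}^{l-k}\sum_{c=1}^2(-1)^{j+c+1}w^\bullet\otimes\partial_{j,c}\eta$, the $(j,c)$ term in $\mathcal M(S\cup\{\alpha_{i_j}\})$, extended $\mathbb Z$-linearly. *)

From HB Require Import structures.
From mathcomp Require Import all_boot all_order all_fingroup all_algebra.

Set Implicit Arguments.
Unset Strict Implicit.
Unset Printing Implicit Defensive.

Import GRing.Theory Num.Theory.
Local Open Scope ring_scope.

(* Cartan matrix of a (real split) semisimple Lie algebra of rank l,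
   C i j = alpha_i(h_{alpha_j}): Cartan matrices of finite type
   (diagonal 2, nonpositive off-diagonal, symmetric zero pattern,
   symmetrizable by a positive diagonal matrix to a positive definite form). *)
Definition cartan_finite (l : nat) (C : 'M[int]_l) : Prop :=
  [/\ forall i, C i i = 2,
      forall i j, i != j -> C i j <= 0,
      forall i j, (C i j == 0) = (C j i == 0) &
      exists d : 'I_l -> rat,
        [/\ forall i, 0 < d i,
            forall i j, d i * (C i j)%:~R = d j * (C j i)%:~R &
            forall x : 'I_l -> rat, (exists i, x i != 0) ->
              0 < \sum_i \sum_j x i * d i * (C i j)%:~R * x j]].

(* Matrix of the simple reflection s_{alpha_i} on the root lattice in the
   basis of simple roots (acting on column vectors):
   s_i(alpha_j) = alpha_j - C j i alpha_i. *)
Definition simple_refl (l : nat) (C : 'M[int]_l) (i : 'I_l) : 'M[int]_l :=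
  \matrix_(a, b) ((a == b)%:Z - (a == i)%:Z * C b i).

Section Complex.
Variables (l : nat) (C : 'M[int]_l) (gT : finGroupType) (W : {group gT})
          (s : 'I_l -> gT).

(* A generator (w, S, N) stands for  w (x) eta  in  M(S), where
   eta : S -> {+-1} takes the value -1 exactly on N (N \subset S). *)
Definition gen := (gT * {set 'I_l} * {set 'I_l})%type.

Definition fmod := {ffun gen -> int}.

Definition basis_el (w : gT) (S N : {set 'I_l}) : fmod :=
  [ffun g => ((g == (w, S, N)) : nat)%:Z].

Definition valid_gen (g : gen) : bool := (g.1.1 \in W) && (g.2 \subset g.1.2).

Definition valid (x : fmod) : Prop := forall g, x g != 0 -> valid_gen g.

Definition WS (S : {set 'I_l}) : {group gT} := <<[set s i | i in S]>>%G.

(* (s_{alpha_i} eta)(alpha_j) = eta(alpha_j) eta(alpha_i)^(-C j i) *)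
Definition sact (S N : {set 'I_l}) (i : 'I_l) : {set 'I_l} :=
  if i \in N then
    let F := [set j in S | odd (absz (C j i))] in (N :\: F) :|: (F :\: N)
  else N.

Definition rr (S : {set 'I_l}) (i : 'I_l) : nat :=
  #|[set j in ~: S | odd (absz (C j i))]|.

(* eta(alpha_i)^(r_i) *)
Definition sgn (S N : {set 'I_l}) (i : 'I_l) : int :=
  if (i \in N) && odd (rr S i) then -1 else 1.

(* Defining relation of Z[W] (x)_{Z[W_S]} Z[D(S)]:
   (w s_i) (x) eta = w (x) (s_i . eta),  for alpha_i in S. *)
Definition rel (w : gT) (S N : {set 'I_l}) (i : 'I_l) : fmod :=
  basis_el (w * s i)%g S N - basis_el w S (sact S N i) *~ sgn S N i.

(* x lies in the relation submodule (x = 0 in the direct sum of the M(S)). *)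
Definition inR (x : fmod) : Prop :=
  exists c : gT -> {set 'I_l} -> {set 'I_l} -> 'I_l -> int,
    x = \sum_(w in W) \sum_(S : {set 'I_l}) \sum_(N : {set 'I_l} | N \subset S)
          \sum_(i in S) rel w S N i *~ c w S N i.

Definition minrep (S : {set 'I_l}) (w : gT) : Prop :=
  forall x, x \in (w *: WS S)%g ->
  forall t : seq 'I_l, (\prod_(i <- t) s i)%g = x ->
  exists2 t' : seq 'I_l, (size t' <= size t)%N & (\prod_(i <- t') s i)%g = w.

Definition pos (S : {set 'I_l}) (i : 'I_l) : nat :=
  #|[set i' in ~: S | (i' < i)%N]|.+1.

Definition bdry (w : gT) (S N : {set 'I_l}) : fmod :=
  \sum_(i | i \notin S) \sum_(c <- [:: 1%N; 2%N])
     basis_el w (i |: S) (if c == 1%N then i |: N else N)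
       *~ ((-1) ^+ (pos S i + c + 1)).

Definition Dmap (d : gen -> fmod) (x : fmod) : fmod := \sum_g d g *~ x g.

Definition wact (u : gT) (x : fmod) : fmod :=
  [ffun g : gen => x ((u^-1 * g.1.1)%g, g.1.2, g.2)].

Definition respectsR (d : gen -> fmod) : Prop :=
  forall x, inR x -> inR (Dmap d x).

Definition basis_formula (d : gen -> fmod) : Prop :=
  forall (w : gT) (S N : {set 'I_l}), w \in W -> N \subset S -> minrep S w ->
    inR (d (w, S, N) - bdry w S N).

End Complex.

From Pilot Require Import Defs.
From HB Require Import structures.
From mathcomp Require Import all_boot all_order all_fingroup all_algebra.
Import GRing.Theory Num.Theory.
Local Open Scope ring_scope.

(* For alpha_i in S and alpha_j outside S, the face d_j (the terms c = 1, 2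
   of the boundary) commutes with the twisted action of s_i on D(S): the image
   of a defining relation (w s_i) (x) eta - w (x) (s_i . eta) of M(S) is a
   signed sum of defining relations of M(S u {alpha_j}), the sign
   eta(alpha_i)^(r_i) changing with S exactly when C j i is odd.  So the
   boundary, defined on the free module by the formula on all generators,
   preserves the relations; it is W-equivariant since it only touches the
   D(S) factor, and it squares to zero since the double face d_k d_j is
   symmetric in j, k while its sign (-1)^(pos S j + pos (S u {j}) k) is
   antisymmetric.  Any map respecting the relations and given by the formula
   on minimal coset representatives agrees with it modulo the relations,
   because each w (x) eta is congruent to a multiple of w0 (x) eta' with w0
   minimal in w W_S. *)

Set Implicit Arguments.
Unset Strict Implicit.

Lemma sum_antisym_eq0 (R : numDomainType) (T I : finType)
    (K : I -> I -> {ffun T -> R}) :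
  (forall j k, K k j = - K j k) -> \sum_j \sum_k K j k = 0.
Proof.
move=> K_anti; set X := \sum_j _.
have X_opp : X = - X.
  rewrite {1}/X exchange_big -sumrN; apply: eq_bigr => j _.
  by rewrite -sumrN; apply: eq_bigr.
apply/ffunP => t; apply/eqP; rewrite ffunE.
have /eqP := congr1 (fun f : {ffun T -> R} => f t) X_opp.
by rewrite ffunE -addr_eq0 -mulr2n mulrn_eq0.
Qed.

Lemma mem_gen_word (gT : finGroupType) (I : finType) (f : I -> gT)
    (A : {pred I}) x :
  x \in <<f @: A>>%g -> exists2 t : seq I, all [in A] t & (\prod_(i <- t) f i)%g = x.
Proof.
case/gen_prodgP => n [c cA ->].
have /fin_all_exists[idx idxP] : forall k, exists i, i \in A /\ c k = f i.
  by move=> k; have /imsetP[i Ai ->] := cA k; exists i.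
exists [seq idx k | k <- index_enum 'I_n].
  by apply/allP => _ /mapP[k _ ->]; case: (idxP k).
by rewrite big_map; apply: eq_bigr => k _; case: (idxP k).
Qed.

Section BoundaryMap.
Variables (l : nat) (gT : finGroupType).
Local Notation fm := (fmod l gT).
Implicit Types (S N : {set 'I_l}) (j k : 'I_l) (u w : gT) (x : fm).

Lemma Dmap_is_zmod_morphism d : zmod_morphism (@Dmap l gT d).
Proof.
move=> x y; rewrite /Dmap -sumrB; apply: eq_bigr => g _.
by rewrite !ffunE mulrzBr.
Qed.

HB.instance Definition _ d :=
  GRing.isZmodMorphism.Build fm fm (@Dmap l gT d) (Dmap_is_zmod_morphism d).

Lemma Dmap_basis d w S N : Dmap d (basis_el w S N) = d (w, S, N).
Proof.
rewrite /Dmap (bigD1 (w, S, N)) //= big1 ?addr0; first by rewrite ffunE eqxx.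
by move=> g /negbTE gNwSN; rewrite ffunE gNwSN.
Qed.

Lemma wact_is_zmod_morphism u : zmod_morphism (@wact l gT u).
Proof. by move=> x y; apply/ffunP => g; rewrite !ffunE. Qed.

HB.instance Definition _ u :=
  GRing.isZmodMorphism.Build fm fm (@wact l gT u) (wact_is_zmod_morphism u).

Lemma wact_basis u w S N : wact u (basis_el w S N) = basis_el (u * w)%g S N.
Proof.
apply/ffunP => [[[a S'] N']]; rewrite !ffunE /= !xpair_eqE.
by rewrite -(inj_eq (mulgI u)) mulKVg.
Qed.

Definition bdryg (g : gen l gT) : fm := bdry g.1.1 g.1.2 g.2.

Definition face w S N j : fm :=
  basis_el w (j |: S) (j |: N) - basis_el w (j |: S) N.

Definition face2 w S N j k : fm :=
  face w (j |: S) (j |: N) k - face w (j |: S) N k.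

(* [basis_el] is locked in the rewriting proofs below: otherwise matching
   unfolds these finite functions and becomes prohibitively slow. *)
Lemma bdryE w S N :
  bdry w S N = \sum_(j | j \notin S) face w S N j *~ (-1) ^+ pos S j.
Proof.
rewrite /bdry; apply: eq_bigr => j _; move: (pos S j) => p.
rewrite /face [@basis_el l gT]lock !big_cons big_nil addr0 /= mulrzBl.
by rewrite !addn1 addn2 !exprS !mulN1r opprK mulrNz.
Qed.

Lemma face2C w S N j k : face2 w S N j k = face2 w S N k j.
Proof.
rewrite /face2 /face [@basis_el l gT]lock !(setUCA [set j]) !opprB.
by rewrite addrACA [RHS]addrACA addrC [RHS]addrC (addrC (- _)).
Qed.

Lemma pos_setU1 S j k : j \notin S -> pos S k = ((j < k)%N + pos (j |: S) k)%N.
Proof.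
move=> jS; rewrite /pos (cardsD1 j) !inE jS addnS; congr (_ + _).+1%N.
by apply: eq_card => i; rewrite !inE negb_or andbA andbAC.
Qed.

Lemma pos_sign_antisym S j k : j \notin S -> k \notin S -> j != k ->
  (-1) ^+ (pos S j + pos (j |: S) k) = - (-1) ^+ (pos S k + pos (k |: S) j) :> int.
Proof.
move=> jS kS jk; rewrite (pos_setU1 j kS) (pos_setU1 k jS) addnAC [in RHS]addnAC.
rewrite -!addnA !exprD [(-1) ^+ pos (k |: S) j * _]mulrC.
case: ltngtP => [_ | _ | /val_inj jk_eq]; rewrite ?expr0 ?expr1 ?mul1r ?mulN1r ?opprK //.
by rewrite jk_eq eqxx in jk.
Qed.

Lemma Dmap_bdryg_face w S N j : Dmap bdryg (face w S N j) =
  \sum_(k | k \notin j |: S) face2 w S N j k *~ (-1) ^+ pos (j |: S) k.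
Proof.
rewrite /face raddfB /= !Dmap_basis /bdryg /= !bdryE -sumrB /face2.
by apply: eq_bigr => k _; rewrite [RHS]mulrzBl.
Qed.

Lemma Dmap_bdryg_bdry w S N : Dmap bdryg (bdry w S N) = 0.
Proof.
pose K j k := if (j \notin S) && (k \notin j |: S)
  then face2 w S N j k *~ (-1) ^+ (pos S j + pos (j |: S) k) else 0.
have -> : Dmap bdryg (bdry w S N) = \sum_j \sum_k K j k.
  rewrite bdryE raddf_sum big_mkcond; apply: eq_bigr => j _ /=.
  rewrite /K; case: (j \notin S) => /=; last by rewrite big1.
  rewrite raddfMz /= Dmap_bdryg_face mulrz_suml big_mkcond; apply: eq_bigr => k _.
  by case: (k \notin _); rewrite // exprD mulrC mulrzA.
apply: sum_antisym_eq0 => j k; rewrite /K.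
have -> : (k \notin S) && (j \notin k |: S) = (j \notin S) && (k \notin j |: S).
  by rewrite !in_setU1 !negb_or (eq_sym k); case: (j \in S); case: (k \in S); rewrite ?andbF.
case: (boolP (_ && _)) => [/andP[jS] | _]; last by rewrite oppr0.
rewrite in_setU1 negb_or => /andP[kj kS].
by rewrite face2C (@pos_sign_antisym S j k) 1?eq_sym // mulrNz opprK.
Qed.

Lemma Dmap_bdryg_square x : Dmap bdryg (Dmap bdryg x) = 0.
Proof.
rewrite {2}/Dmap raddf_sum big1 // => g _.
by rewrite raddfMz /= Dmap_bdryg_bdry mul0rz.
Qed.

Lemma wact_bdry u w S N : wact u (bdry w S N) = bdry (u * w)%g S N.
Proof.
rewrite /bdry raddf_sum; apply: eq_bigr => j _.
by rewrite raddf_sum; apply: eq_bigr => c _; rewrite raddfMz /= wact_basis.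
Qed.

Lemma wact_Dmap_bdryg u x : wact u (Dmap bdryg x) = Dmap bdryg (wact u x).
Proof.
pose h (g : gen l gT) : gen l gT := ((u * g.1.1)%g, g.1.2, g.2).
have h_inj : injective h by move=> [[a S] N] [[b T] M] [/mulgI -> -> ->].
rewrite /Dmap raddf_sum [RHS](reindex_inj h_inj); apply: eq_bigr => -[[w S] N] _.
by rewrite raddfMz /= wact_bdry ffunE /= mulKg.
Qed.
End BoundaryMap.

Arguments bdryg {l gT} g.

Section Validity.
Variables (l : nat) (gT : finGroupType) (W : {group gT}).
Local Notation fm := (fmod l gT).
Implicit Types (S N : {set 'I_l}) (u w : gT) (x y : fm).

Lemma valid0 : valid W (0 : fm).
Proof. by move=> g; rewrite ffunE eqxx. Qed.

Lemma validD x y : valid W x -> valid W y -> valid W (x + y).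
Proof.
move=> vx vy g; rewrite ffunE; have [xg0 | /vx //] := eqVneq (x g) 0.
by rewrite xg0 add0r => /vy.
Qed.

Lemma validMz x z : valid W x -> valid W (x *~ z).
Proof.
move=> vx g; rewrite ffunMzE => xz_g; apply: vx.
by apply: contraNneq xz_g => ->; rewrite mul0rz.
Qed.

Lemma valid_sum (I : Type) (r : seq I) (P : pred I) (F : I -> fm) :
  (forall a, P a -> valid W (F a)) -> valid W (\sum_(a <- r | P a) F a).
Proof.
move=> vF; elim/big_rec: _ => [|a x Pa vx]; first exact: valid0.
exact/validD/vx/vF.
Qed.

Lemma valid_basis w S N : w \in W -> N \subset S -> valid W (basis_el w S N).
Proof.
move=> wW NS g; rewrite ffunE.
case: (eqVneq g (w, S, N)) => [-> _ | _]; last by rewrite eqxx.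
by apply/andP.
Qed.

Lemma valid_bdry w S N : w \in W -> N \subset S -> valid W (bdry w S N).
Proof.
move=> wW NS; apply: valid_sum => j _; apply: valid_sum => c _.
apply/validMz/valid_basis => //; case: (c == 1%N); first exact: setUS.
exact: subset_trans NS (subsetUr _ _).
Qed.

Lemma valid_Dmap d x : (forall g, valid_gen W g -> valid W (d g)) ->
  valid W x -> valid W (Dmap d x).
Proof.
move=> vd vx; apply: valid_sum => g _.
have [-> | /vx/vd] := eqVneq (x g) 0; first by rewrite mulr0z; apply: valid0.
exact: validMz.
Qed.

Lemma valid_Dmap_bdryg x : valid W x -> valid W (Dmap bdryg x).
Proof. by apply: valid_Dmap => -[[w S] N] /andP[]; apply: valid_bdry. Qed.

Lemma valid_wact u x : u \in W -> valid W x -> valid W (wact u x).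
Proof.
move=> uW vx [[a S] N]; rewrite ffunE => /vx /andP[/= aW NS].
by apply/andP; split=> //=; rewrite -(mulKVg u a) groupM.
Qed.
End Validity.

Section Relations.
Variables (l : nat) (C : 'M[int]_l) (gT : finGroupType) (W : {group gT})
          (s : 'I_l -> gT).
Local Notation fm := (fmod l gT).
Local Notation inR := (inR C W s).
Local Notation rel := (Defs.rel C s).
Implicit Types (S N : {set 'I_l}) (i j : 'I_l) (u w : gT) (x y : fm).

Lemma inR0 : inR 0.
Proof.
exists (fun _ _ _ _ => 0); symmetry.
by do 4!(apply: big1 => ? _); rewrite mulr0z.
Qed.

Lemma inRD x y : inR x -> inR y -> inR (x + y).
Proof.
move=> [c ->] [c' ->]; exists (fun w S N i => c w S N i + c' w S N i).
by do 4!(rewrite -big_split; apply: eq_bigr => ? _); rewrite mulrzDr.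
Qed.

Lemma inRMz x z : inR x -> inR (x *~ z).
Proof.
move=> [c ->]; exists (fun w S N i => c w S N i * z).
by do 4!(rewrite mulrz_suml; apply: eq_bigr => ? _); rewrite mulrzA.
Qed.

Lemma inRB x y : inR x -> inR y -> inR (x - y).
Proof. by move=> Rx Ry; rewrite -mulrN1z; apply/inRD/inRMz. Qed.

Lemma inR_sym x y : inR (x - y) -> inR (y - x).
Proof. by move=> Rxy; rewrite -opprB -mulrN1z; apply: inRMz. Qed.

Lemma inR_trans y x z : inR (x - y) -> inR (y - z) -> inR (x - z).
Proof. by move=> Rxy Ryz; rewrite -(subrKA y); apply: inRD. Qed.

Lemma inR_sum (I : Type) (r : seq I) (P : pred I) (F : I -> fm) :
  (forall a, P a -> inR (F a)) -> inR (\sum_(a <- r | P a) F a).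
Proof.
move=> RF; elim/big_rec: _ => [|a x Pa Rx]; first exact: inR0.
exact/inRD/Rx/RF.
Qed.

Lemma inR_rel w S N i : w \in W -> N \subset S -> i \in S -> inR (rel w S N i).
Proof.
move=> wW NS iS.
exists (fun w' S' N' i' => ((w', S', N', i') == (w, S, N, i) : nat)%:Z).
rewrite (bigD1 w) //= [X in _ + X]big1 ?addr0 => [|w' /andP[_ w'w]]; last first.
  by do 3!(apply: big1 => ? _); rewrite !xpair_eqE (negbTE w'w).
rewrite (bigD1 S) //= [X in _ + X]big1 ?addr0 => [|S' S'S]; last first.
  by do 2!(apply: big1 => ? _); rewrite !xpair_eqE (negbTE S'S) andbF.
rewrite (bigD1 N) //= [X in _ + X]big1 ?addr0 => [|N' /andP[_ N'N]]; last first.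
  by apply: big1 => ? _; rewrite !xpair_eqE (negbTE N'N) andbF.
rewrite (bigD1 i) //= [X in _ + X]big1 ?addr0 => [|i' /andP[_ i'i]]; last first.
  by rewrite !xpair_eqE (negbTE i'i) andbF.
by rewrite eqxx.
Qed.

Lemma inR_additive (f : {additive fm -> fm}) :
  (forall w S N i, w \in W -> N \subset S -> i \in S -> inR (f (rel w S N i))) ->
  forall x, inR x -> inR (f x).
Proof.
move=> Rf x [c ->].
do 4!(rewrite raddf_sum; apply: inR_sum => ? ?).
by rewrite raddfMz; apply/inRMz/Rf.
Qed.

Lemma inR_wact u x : u \in W -> inR x -> inR (wact u x).
Proof.
move=> uW; apply: inR_additive => w S N i wW NS iS.
rewrite /Defs.rel raddfB raddfMz /= !wact_basis mulgA.
by apply: inR_rel; rewrite ?groupM.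
Qed.

Lemma Dmap_inR_congr d1 d2 x : (forall g, valid_gen W g -> inR (d1 g - d2 g)) ->
  valid W x -> inR (Dmap d1 x - Dmap d2 x).
Proof.
move=> Rd vx; rewrite /Dmap -sumrB; apply: inR_sum => g _; rewrite -mulrzBl.
have [-> | /vx/Rd] := eqVneq (x g) 0; first by rewrite mulr0z; apply: inR0.
exact: inRMz.
Qed.

Lemma respectsR_basis_el d w S N w' S' N' e : respectsR C W s d ->
  inR (basis_el w S N - basis_el w' S' N' *~ e) ->
  inR (d (w, S, N) - d (w', S', N') *~ e).
Proof. by move=> dR /dR; rewrite raddfB raddfMz /= !Dmap_basis. Qed.

Lemma rr_setU1 S i j : j \notin S -> rr C S i = (odd `|C j i| + rr C (j |: S) i)%N.
Proof.
move=> jS; rewrite /rr (cardsD1 j) !inE jS; congr (_ + _)%N.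
by apply: eq_card => k; rewrite !inE negb_or andbA andbAC.
Qed.

Lemma sgn_setU1 S M i j : j \notin S ->
  sgn C (j |: S) M i = sgn C S M i * (-1) ^+ ((i \in M) && odd `|C j i|).
Proof.
move=> jS; rewrite /sgn (rr_setU1 i jS) oddD.
by case: (i \in M); case: (odd `|C j i|); case: (odd _); rewrite /= ?mulr1 ?mulrNN ?mulN1r.
Qed.

Lemma sact_setU1 S N i j : N \subset S -> j \notin S ->
  sact C (j |: S) N i =
  if (i \in N) && odd `|C j i| then j |: sact C S N i else sact C S N i.
Proof.
move=> NS jS; have jN : j \notin N by apply: contra jS; apply: (subsetP NS).
rewrite /sact; case: (i \in N) => //=.
case oji: (odd _); apply/setP => k; rewrite !inE;
  by case: (eqVneq k j) => [->|] /=; rewrite ?oji ?(negbTE jN) ?(negbTE jS).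
Qed.

Lemma sact_setU1_setU1 S N i j : N \subset S -> i \in S -> j \notin S ->
  sact C (j |: S) (j |: N) i =
  if (i \in N) && odd `|C j i| then sact C S N i else j |: sact C S N i.
Proof.
move=> NS iS jS; have jN : j \notin N by apply: contra jS; apply: (subsetP NS).
have ij : i != j by apply: contraNneq jS => <-.
rewrite /sact in_setU1 (negbTE ij); case: (i \in N) => //=.
case oji: (odd _); apply/setP => k; rewrite !inE;
  by case: (eqVneq k j) => [->|] /=; rewrite ?oji ?(negbTE jN) ?(negbTE jS).
Qed.

Lemma sact_sub S N i : N \subset S -> sact C S N i \subset S.
Proof.
move=> NS; rewrite /sact; case: (i \in N) => //.
by apply/subsetP => k; rewrite !inE => /orP[/andP[_ /(subsetP NS)] | /andP[_ /andP[]]].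
Qed.

Lemma face_sact w S N i j : N \subset S -> i \in S -> j \notin S ->
  face (w * s i)%g S N j - face w S (sact C S N i) j *~ sgn C S N i =
  rel w (j |: S) (j |: N) i - rel w (j |: S) N i.
Proof.
move=> NS iS jS; have ij : i != j by apply: contraNneq jS => <-.
have sgn_jN : sgn C S (j |: N) i = sgn C S N i by rewrite /sgn in_setU1 (negbTE ij).
rewrite /face /Defs.rel !sgn_setU1 // sgn_jN in_setU1 (negbTE ij) /=.
rewrite sact_setU1_setU1 // sact_setU1 //.
move: (sgn C S N i) (sact C S N i) => e M; rewrite [@basis_el l gT]lock.
rewrite mulrzBl opprB addrACA.
case: (_ && _); rewrite ?mulrN1 ?mulr1 ?mulrNz ?opprK; first by rewrite opprD.
by rewrite opprB [RHS]addrACA [X in _ = _ + X]addrC.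
Qed.

Lemma Dmap_bdryg_rel w S N i : w \in W -> N \subset S -> i \in S ->
  inR (Dmap bdryg (rel w S N i)).
Proof.
move=> wW NS iS; rewrite /Defs.rel raddfB raddfMz /= !Dmap_basis /bdryg /= !bdryE.
rewrite mulrz_suml -sumrB; apply: inR_sum => j jS.
have iSj : i \in j |: S by rewrite in_setU1 iS orbT.
have NSj : N \subset j |: S := subset_trans NS (subsetUr _ _).
rewrite mulrzAC -mulrzBl face_sact //.
by apply/inRMz/inRB; apply: inR_rel => //; apply: setUS.
Qed.

Lemma bdryg_respectsR : respectsR C W s bdryg.
Proof. exact: inR_additive Dmap_bdryg_rel. Qed.
End Relations.

Section Reduction.
Variables (l : nat) (C : 'M[int]_l) (gT : finGroupType) (W : {group gT})
          (s : 'I_l -> gT).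
Hypothesis W_gen : W :=: <<[set s i | i : 'I_l]>>%g.
Local Notation inR := (inR C W s).
Implicit Types (S N : {set 'I_l}) (i : 'I_l) (v w : gT).

Lemma s_in_W i : s i \in W.
Proof. by rewrite W_gen mem_gen // imset_f. Qed.

Lemma WS_subW S : WS s S \subset W.
Proof. by rewrite gen_subG; apply/subsetP => _ /imsetP[i _ ->]; apply: s_in_W. Qed.

Lemma basis_el_coset w v S N : w \in W -> v \in WS s S -> N \subset S ->
  exists e : int, exists2 N' : {set 'I_l}, N' \subset S &
    inR (basis_el (w * v)%g S N - basis_el w S N' *~ e).
Proof.
move=> + /mem_gen_word[t tS <-] NS; elim: t tS w => [_ | i t IH /andP[iS tS]] w wW.
  by exists 1; exists N; rewrite // big_nil mulg1 mulr1z subrr; apply: inR0.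
have [e [N' N'S R_t]] := IH tS _ (groupM wW (s_in_W i)).
exists (sgn C S N' i * e); exists (sact C S N' i); first exact: sact_sub.
rewrite big_cons mulgA; apply: inR_trans R_t _.
by rewrite mulrzA -mulrzBl; apply/inRMz/inR_rel.
Qed.

Lemma minrep_exists S w : w \in W ->
  exists w0, [/\ w0 \in W, minrep s S w0 & (w0^-1 * w)%g \in WS s S].
Proof.
move=> wW.
pose P n := [exists x in (w *: WS s S)%g,
              exists t : n.-tuple 'I_l, (\prod_(i <- t) s i)%g == x].
have exP : exists n, P n.
  have /mem_gen_word[t _ tw] : w \in <<[set s i | i : 'I_l]>>%g by rewrite -W_gen.
  exists (size t); apply/existsP; exists w; rewrite lcoset_refl /=.
  by apply/existsP; exists (in_tuple t); rewrite tw.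
case: (ex_minnP exP) => n /existsP[w0 /andP[w0_coset /existsP[t0 /eqP t0w0]]] n_min.
exists w0; split.
- by have /lcosetP[a aWS ->] := w0_coset; rewrite groupM // (subsetP (WS_subW S)).
- move=> x x_coset t tx; exists (val t0); rewrite ?size_tuple //.
  apply: n_min; apply/existsP; exists x; rewrite (lcoset_trans x_coset w0_coset) /=.
  by apply/existsP; exists (in_tuple t); rewrite tx.
- by rewrite -mem_lcoset lcoset_sym.
Qed.

Lemma basis_formula_agree d : respectsR C W s d -> basis_formula C W s d ->
  forall g, valid_gen W g -> inR (d g - bdryg g).
Proof.
move=> dR dB [[w S] N] /andP[/= wW NS].
have [w0 [w0W w0_min vWS]] := minrep_exists S wW.
have [e [N' N'S R_w]] := basis_el_coset w0W vWS NS; rewrite mulKVg in R_w.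
have R_d := respectsR_basis_el dR R_w.
have R_b := respectsR_basis_el (@bdryg_respectsR _ C _ W s) R_w.
apply: inR_trans R_d _; apply: inR_trans (inR_sym R_b).
by rewrite -mulrzBl; apply/inRMz/dB.
Qed.
End Reduction.

Unset Implicit Arguments.

Theorem proposition3p3p2 (l : nat) (C : 'M[int]_l) (hC : cartan_finite C)
  (gT : finGroupType) (W : {group gT}) (s : 'I_l -> gT) (rho : gT -> 'M[int]_l)
  (hgen : W :=: <<[set s i | i : 'I_l]>>%g)
  (hrho_mul : {in W &, forall x y, rho (x * y)%g = rho x *m rho y})
  (hrho_inj : {in W &, injective rho})
  (hrho_s : forall i, rho (s i) = simple_refl C i) :
  (exists d : gen l gT -> fmod l gT,
      respectsR C W s d /\ basis_formula C W s d) /\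
  (forall d : gen l gT -> fmod l gT,
      respectsR C W s d -> basis_formula C W s d ->
      (forall u x, u \in W -> valid W x ->
          inR C W s (Dmap d (wact u x) - wact u (Dmap d x))) /\
      (forall x, valid W x -> inR C W s (Dmap d (Dmap d x)))).
Proof.
split.
  exists bdryg; split; first exact: bdryg_respectsR.
  by move=> w S N _ _ _; rewrite subrr; apply: inR0.
move=> d dR dB.
have d_bdryg x : valid W x -> inR C W s (Dmap d x - Dmap bdryg x).
  exact/Dmap_inR_congr/(basis_formula_agree hgen dR dB).
split=> [u x uW vx | x vx].
  apply: inR_trans (d_bdryg _ (valid_wact uW vx)) _.
  by rewrite -wact_Dmap_bdryg -raddfB; apply/inR_wact/inR_sym/d_bdryg.
have R_dd : inR C W s (Dmap d (Dmap d x) - Dmap d (Dmap bdryg x)).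
  by rewrite -raddfB; apply/dR/d_bdryg.
have := inR_trans R_dd (d_bdryg _ (valid_Dmap_bdryg vx)).
by rewrite Dmap_bdryg_square subr0.
Qed.
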